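(* Let $p$ be an odd prime and $G$ a finite non-abelian $2$-generated $p$-group with cyclic $G'$, with parameters $m,o_1,o_2,r_1,r_2$ as in the context. Let $\delta_1,\delta_2$ be the unique integers with $1\le\delta_1\le p^{o_1}$, $1\le\delta_2\le p^{o_2}$ such that $\mathcal{S}_{r_2}(\delta_1p^{m-o_1})\equiv 1-r_1\bmod p^m$ and $\mathcal{S}_{r_1}(\delta_2p^{m-o_2})\,r_2^{\delta_1p^{m-o_1}}\equiv r_2-1\bmod p^m$. Then $\delta_1=\delta_2=1$ if $o_1=0$, and $\delta_1+\delta_2\equiv 0\bmod p^{o_2}$ otherwise.
   Context: $\mathcal{S}_s(n)=\sum_{i=0}^{n-1}s^i$. Let $|G'|=p^m$, $G/G'\cong C_{p^{n_1}}\times C_{p^{n_2}}$, $n_1\ge n_2\ge1$. A basis is a pair $(b_1,b_2)$ with $G/G'=\langle b_1G'\rangle\times\langle b_2G'\rangle$ and $|b_iG'|=p^{n_i}$. For $g\in G$, $p^{o(g)}=|g{\rm C}_G(G')|$. $(o_1,o_2)=\min_{\mathrm{lex}}\{(o(b_1),o(b_2)):(b_1,b_2)\text{ a basis}\}$; $r_1=1+p^{m-o_1}$; $r_2=1+p^{m-o_2}$ if $o_2>o_1$, else $r_2=r_1^{p^{o_1-o_2}}$. *)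

From mathcomp Require Import all_boot all_order all_algebra all_fingroup all_solvable.
Set Implicit Arguments. Unset Strict Implicit. Unset Printing Implicit Defensive.
Import GRing.Theory.

Definition oexp (gT : finGroupType) (p : nat) (G : {group gT}) (g : gT) : nat :=
  logn p #[coset 'C_G(G^`(1)) g]%g.

Definition is_basis (gT : finGroupType) (p : nat) (G : {group gT})
    (n1 n2 : nat) (b1 b2 : gT) : bool :=
  [&& b1 \in G, b2 \in G,
      #[coset G^`(1) b1]%g == p ^ n1,
      #[coset G^`(1) b2]%g == p ^ n2 &
      ((<[coset G^`(1) b1]> \x <[coset G^`(1) b2]>)%g == (G / G^`(1))%g)].

Definition lexmin_o (gT : finGroupType) (p : nat) (G : {group gT})
    (n1 n2 o1 o2 : nat) : Prop :=
  (exists b1 b2, is_basis p G n1 n2 b1 b2 /\ oexp p G b1 = o1 /\ oexp p G b2 = o2)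
  /\ (forall c1 c2 : gT, is_basis p G n1 n2 c1 c2 ->
        (o1 < oexp p G c1) || ((o1 == oexp p G c1) && (o2 <= oexp p G c2))).

Definition r1_of (p m o1 : nat) : nat := 1 + p ^ (m - o1).
Definition r2_of (p m o1 o2 : nat) : nat :=
  if o1 < o2 then 1 + p ^ (m - o2) else (r1_of p m o1) ^ (p ^ (o1 - o2)).

Definition Ssum (s : int) (n : nat) : int := (\sum_(i < n) s ^+ i)%R.

(* The cosets of C_G(G') form a cyclic group, since Aut of a cyclic p-group is cyclic for
   odd p.  So if o1 < o2, the coset of b1 modulo C_G(G') is a power of that of b2, and
   dividing b1 by that power of b2 gives a basis with o(b1) = 0; by minimality o2 <= o1
   unless o1 = 0, and then r2 = r1^(p^(o1-o2)).  With S_r(a + b) = S_r(a) + r^a S_r(b) and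
   S_r(kn) = S_r(k) S_(r^k)(n), the two congruences add up to
   S_r1((d1 + d2) p^(m-o2)) = 0 mod p^m.  As r1 = 1 mod p and p is odd, S_r1(N) has the
   same p-adic valuation as N, whence p^o2 | d1 + d2.  When o1 = 0 the same valuation
   argument gives r2^(p^m) = 1 and S_r1(N) = N mod p^m, so the second congruence reads
   d2 p^(m-o2) = p^(m-o2) mod p^m, i.e. d2 = 1. *)

From mathcomp Require Import all_boot all_order all_algebra all_fingroup all_solvable.
From mathcomp Require Import zify ring.
Import GRing.Theory.

Set Implicit Arguments.
Unset Strict Implicit.
Unset Printing Implicit Defensive.

Section GeometricSums.
Local Open Scope ring_scope.
Implicit Types (r t : int) (n k : nat).

Lemma PoszX n k : (n ^ k)%:Z = n%:Z ^+ k.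
Proof. by rewrite -[LHS]natz natrX natz. Qed.

Lemma SsumS r n : Ssum r n.+1 = Ssum r n + r ^+ n.
Proof. by rewrite /Ssum big_ord_recr. Qed.

Lemma Ssum_geom r n : r ^+ n - 1 = (r - 1) * Ssum r n.
Proof. exact: subrX1. Qed.

Lemma SsumD r a b : Ssum r (a + b) = Ssum r a + r ^+ a * Ssum r b.
Proof.
elim: b => [|b IHb]; first by rewrite addn0 /Ssum big_ord0 mulr0 addr0.
by rewrite addnS !SsumS IHb exprD mulrDr addrA.
Qed.

Lemma SsumM r k n : Ssum r (k * n) = Ssum r k * Ssum (r ^+ k) n.
Proof.
elim: n => [|n IHn]; first by rewrite muln0 /Ssum !big_ord0 mulr0.
rewrite mulnS SsumD IHn -[n.+1]add1n SsumD [Ssum _ 1]/Ssum big_ord1.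
by rewrite mulrDr mulr1 mulrCA.
Qed.

Lemma Ssum_modz t n : (Ssum (1 + t) n = n %[mod t])%Z.
Proof.
apply/eqP; rewrite eqz_mod_dvd; elim: n => [|n IHn].
  by rewrite /Ssum big_ord0 subrr dvdz0.
have -> : Ssum (1 + t) n.+1 - n.+1%:Z
    = Ssum (1 + t) n - n%:Z + ((1 + t) ^+ n - 1).
  by rewrite SsumS -addn1 PoszD; ring.
by rewrite rpredD // Ssum_geom [1 + t]addrC addrK dvdz_mulr.
Qed.

Lemma Ssum_modz_sqr t n : (Ssum (1 + t) n = n%:Z + t * 'C(n, 2)%:Z %[mod t ^+ 2])%Z.
Proof.
apply/eqP; rewrite eqz_mod_dvd; elim: n => [|n IHn].
  by rewrite /Ssum big_ord0 bin0n mulr0 !subrr dvdz0.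
have -> : Ssum (1 + t) n.+1 - (n.+1%:Z + t * 'C(n.+1, 2)%:Z)
    = Ssum (1 + t) n - (n%:Z + t * 'C(n, 2)%:Z) + t * (Ssum (1 + t) n - n%:Z).
  rewrite SsumS binS bin1 -addn1 !PoszD -[(1 + t) ^+ n](subrK 1) Ssum_geom.
  ring.
have /eqP := Ssum_modz t n; rewrite eqz_mod_dvd => tS.
by rewrite rpredD // expr2 dvdz_mul.
Qed.

Lemma Ssum_prime_modz p t : prime p -> odd p -> (p %| t)%Z ->
  (Ssum (1 + t) p = p %[mod (p ^ 2)%:Z])%Z.
Proof.
move=> p_pr p_odd pt; apply/eqP; rewrite eqz_mod_dvd.
have /eqP := Ssum_modz_sqr t p; rewrite eqz_mod_dvd => tS.
have -> : Ssum (1 + t) p - p%:Z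
    = Ssum (1 + t) p - (p%:Z + t * 'C(p, 2)%:Z) + t * 'C(p, 2)%:Z by ring.
rewrite PoszX rpredD //; first by apply: dvdz_trans tS; apply: dvdz_exp2r.
by rewrite expr2 dvdz_mul //= dvdzE prime_dvd_bin // odd_prime_gt2.
Qed.

Lemma dvdz_Ssum p k t N : prime p -> odd p -> (p %| t)%Z ->
  ((p ^ k)%:Z %| Ssum (1 + t) N)%Z = (p ^ k %| N)%N.
Proof.
move=> p_pr p_odd; elim: k t N => [|k IHk] t N pt; first by rewrite expn0 dvdzE !dvd1n.
have [/dvdnP [N' ->] | pN] := boolP (p %| N)%N; last first.
  have -> : (p ^ k.+1 %| N)%N = false.
    by apply: contraNF pN; apply: dvdn_trans; rewrite expnS dvdn_mulr.
  apply/negbTE; apply: contra pN => pkS.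
  have pS : (p %| Ssum (1 + t) N)%Z.
    by apply: dvdz_trans pkS; rewrite dvdzE /= expnS dvdn_mulr.
  have /eqP := Ssum_modz t N; rewrite eqz_mod_dvd => tSN.
  by have := rpredB pS (dvdz_trans pt tSN); rewrite subKr.
have [u Su pu] : exists2 u, Ssum (1 + t) p = p%:Z * u & ~~ (p %| u)%Z.
  have /eqP := Ssum_prime_modz p_pr p_odd pt; rewrite eqz_mod_dvd => /dvdzP [q Sq].
  exists (1 + q * p); first by rewrite -(subrK p%:Z (Ssum _ _)) Sq PoszX; ring.
  by rewrite rpredDr ?dvdz_mull // dvdz1 gtn_eqF ?prime_gt1.
have pt' : (p %| (1 + t) ^+ p - 1)%Z by rewrite Ssum_geom [1 + t]addrC addrK dvdz_mulr.
rewrite mulnC SsumM Su -mulrA expnS PoszM dvdz_mul2l ?Gauss_dvdzr //.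
- by rewrite -[(1 + t) ^+ p](addrNK 1) addrC IHk // dvdn_pmul2l ?prime_gt0.
- by rewrite coprimezE /= coprimeXl // prime_coprime.
- by rewrite -lt0n prime_gt0.
Qed.

Lemma Ssum_congr_dvdn p m k n N t : prime p -> odd p -> (p %| t)%Z ->
  (Ssum ((1 + t) ^+ k) n = 1 - (1 + t) %[mod (p ^ m)%:Z])%Z ->
  (Ssum (1 + t) N * ((1 + t) ^+ k) ^+ n = (1 + t) ^+ k - 1 %[mod (p ^ m)%:Z])%Z ->
  (p ^ m %| k * n + N)%N.
Proof.
move=> p_pr p_odd pt /eqP + /eqP; rewrite !eqz_mod_dvd => H1 H2.
rewrite -(dvdz_Ssum _ _ p_pr p_odd pt) SsumD SsumM exprM.
set r := 1 + t in H1 H2 *; set s := r ^+ k in H1 H2 *.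
have -> : Ssum r k * Ssum s n + s ^+ n * Ssum r N
    = Ssum r k * (Ssum s n - (1 - r)) + (Ssum r N * s ^+ n - (s - 1)).
  by rewrite Ssum_geom; ring.
by rewrite rpredD ?dvdz_mull.
Qed.

Lemma Ssum_ppow_modz p m N s : prime p -> odd p -> (p %| s)%Z ->
  (Ssum (1 + (p ^ m)%:Z) N * (1 + s) ^+ (p ^ m) = N %[mod (p ^ m)%:Z])%Z.
Proof.
move=> p_pr p_odd ps; apply/eqP; rewrite eqz_mod_dvd.
have /eqP := Ssum_modz (p ^ m)%:Z N; rewrite eqz_mod_dvd => SN.
have pmS : ((p ^ m)%:Z %| Ssum (1 + s) (p ^ m))%Z by rewrite dvdz_Ssum.
have -> : Ssum (1 + (p ^ m)%:Z) N * (1 + s) ^+ (p ^ m) - N%:Z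
    = (Ssum (1 + (p ^ m)%:Z) N - N%:Z) * (1 + s) ^+ (p ^ m)
      + N%:Z * ((1 + s) ^+ (p ^ m) - 1) by ring.
by rewrite rpredD ?(dvdz_mulr _ SN) // Ssum_geom !dvdz_mull.
Qed.

End GeometricSums.

Section BasisChange.
Local Open Scope group_scope.
Variables (gT : finGroupType) (H : {group gT}) (u v z : gT).
Hypotheses (dvd_vu : #[v] %| #[u]) (vz : z \in <[v]>) (uvH : <[u]> \x <[v]> = H).

Let cvu : <[v]> \subset 'C(<[u]>).
Proof. by case/dprodP: uvH. Qed.

Let tiuv : <[u]> :&: <[v]> = 1.
Proof. by case/dprodP: uvH. Qed.

Let expMz k : (u * z) ^+ k = u ^+ k * z ^+ k.
Proof.
apply/expgMn/commute_sym/cent1P; rewrite -cent_cycle.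
exact: subsetP cvu z vz.
Qed.

Let expz_eq1 k : u ^+ k = 1 -> z ^+ k = 1.
Proof.
move/eqP; rewrite -order_dvdn => uk; apply/eqP; rewrite -order_dvdn.
by rewrite (dvdn_trans _ uk) // (dvdn_trans (order_dvdG vz)) // -orderE.
Qed.

Let expMz_cycle k : (u * z) ^+ k \in <[v]> -> u ^+ k = 1.
Proof.
rewrite expMz (groupMr _ (groupX k vz)) => vuk.
have : u ^+ k \in <[u]> :&: <[v]> by rewrite inE mem_cycle.
by rewrite tiuv => /set1P.
Qed.

Lemma order_mul_cycle : #[u * z] = #[u].
Proof.
apply/eqP; rewrite eqn_dvd !order_dvdn expMz expz_eq1 ?expg_order ?mulg1 ?eqxx //=.
by rewrite expMz_cycle // expg_order group1.
Qed.

Lemma dprod_mul_cycle : <[u * z]> \x <[v]> = H.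
Proof.
have ti : <[u * z]> :&: <[v]> = 1.
  apply/trivgP/subsetP => _ /setIP[/cycleP[k ->] vk]; apply/set1P.
  by rewrite expMz expMz_cycle // expz_eq1 ?mulg1 // expMz_cycle.
have cv : <[v]> \subset 'C(<[u * z]>).
  rewrite centsC cycle_subG groupM //; first by rewrite -cycle_subG centsC.
  exact: subsetP (cycle_abelian v) z vz.
have [suH svH] : u \in H /\ v \in H.
  by have [/andP[+ _] /andP[+ _]] := dprod_normal2 uvH; rewrite !cycle_subG.
rewrite dprodE //; apply/eqP; rewrite eqEcard mul_subG ?cycle_subG ?groupM //=.
- by rewrite TI_cardMg // -(dprod_card uvH) -!orderE order_mul_cycle.
- by apply: subsetP vz; rewrite cycle_subG.
Qed.
End BasisChange.

Section DerivedCentraliser.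
Local Open Scope group_scope.
Variables (gT : finGroupType) (p : nat) (G : {group gT}).

Lemma cyclic_quotient_cent_cyclic_pgroup (X : {group gT}) :
  odd p -> p.-group X -> cyclic X -> G \subset 'N(X) -> cyclic (G / 'C_G(X)).
Proof.
move=> p_odd pX cycX nXG; have [-> | ntX] := eqsVneq X 1.
  by rewrite cent1T setIT trivg_quotient cyclic1.
have [f injf im_f] := first_isom_loc [morphism of conj_aut X] nXG.
rewrite ker_conj_aut in f injf im_f *.
have cycA : cyclic (Aut X).
  have [m [_ [_ cycF _ _] AutX]] := cyclic_pgroup_Aut_structure pX cycX ntX.
  move: AutX; case: eqP => _; first by move=> ->.
  by case=> t [_ _ _]; rewrite p_odd => -[[]].
have sfA : f @* (G / 'C_G(X)) \subset Aut X by rewrite im_f ?Aut_conj_aut.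
by rewrite -(injm_cyclic injf) ?(cyclicS sfA).
Qed.

Lemma norm_subcent_der : G \subset 'N('C_G(G^`(1))).
Proof. by rewrite -{1}(setIidPl (der_norm 1 G)) subcent_norm. Qed.

Lemma order_coset_oexp g : prime p -> p.-group G -> g \in G ->
  #[coset 'C_G(G^`(1)) g] = (p ^ oexp p G g)%N.
Proof.
move=> p_pr pG Gg; rewrite /oexp.
have /p_natP[k ->] : p.-elt (coset 'C_G(G^`(1)) g).
  exact: mem_p_elt (quotient_pgroup _ pG) (mem_quotient _ Gg).
by rewrite pfactorK.
Qed.

Lemma oexp_leq g : p.-group G -> cyclic G^`(1) -> g \in G ->
  oexp p G g <= (logn p #|G^`(1)|).-1.
Proof.
move=> pG cG' Gg.
have pG' := pgroupS (der_sub 1 G) pG.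
apply: leq_trans (logn_quotient_cent_cyclic_pgroup (der_norm 1 G) pG' cG').
by apply: dvdn_leq_log => //; apply: order_dvdG; apply: mem_quotient.
Qed.

Lemma lexmin_o_le n1 n2 o1 o2 : prime p -> odd p -> p.-group G -> cyclic G^`(1) ->
  (n2 <= n1)%N -> lexmin_o p G n1 n2 o1 o2 -> o1 != 0%N -> (o2 <= o1)%N.
Proof.
move=> p_pr p_odd pG cG' le_n21 [[b1 [b2 [basis_b [o1E o2E]]]] lexmin] o1_neq0.
rewrite leqNgt; apply: contra o1_neq0 => lt_o12.
have /and5P[Gb1 Gb2 ob1 ob2 /eqP dpG] := basis_b.
set C := 'C_G(G^`(1)); have nCG := subsetP norm_subcent_der.
have nG'G := subsetP (der_norm 1 G).
have cycQ : cyclic (G / C).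
  have pG' := pgroupS (der_sub 1 G) pG.
  exact: cyclic_quotient_cent_cyclic_pgroup p_odd pG' cG' (der_norm 1 G).
have /cycleP[j b1j] : coset C b1 \in <[coset C b2]>.
  rewrite -cycle_subG -(cardSg_cyclic cycQ) ?cycle_subG ?mem_quotient //.
  by rewrite -!orderE !order_coset_oexp // o1E o2E dvdn_exp2l // ltnW.
set c1 := b1 * (b2 ^+ j)^-1.
have Gc1 : c1 \in G by rewrite groupM ?groupV ?groupX.
have oc1 : oexp p G c1 = 0%N.
  rewrite /oexp -/C.
  have -> : coset C c1 = coset C b1 * (coset C b2 ^+ j)^-1.
    by rewrite morphM ?morphV ?morphX ?nCG ?groupV ?groupX.
  by rewrite b1j mulgV order1 logn1.
have ob21 : #[coset G^`(1) b2] %| #[coset G^`(1) b1].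
  by rewrite (eqP ob1) (eqP ob2) dvdn_exp2l.
have vz : (coset G^`(1) (b2 ^+ j))^-1 \in <[coset G^`(1) b2]>.
  by rewrite groupV morphX ?nG'G ?mem_cycle.
have c1E : coset G^`(1) c1 = coset G^`(1) b1 * (coset G^`(1) (b2 ^+ j))^-1.
  by rewrite morphM ?morphV ?nG'G ?groupV ?groupX.
have basis_c : is_basis p G n1 n2 c1 b2.
  rewrite /is_basis Gc1 Gb2 ob2 c1E (order_mul_cycle ob21 vz dpG).
  by rewrite (dprod_mul_cycle ob21 vz dpG) ob1 eqxx.
by have := lexmin _ _ basis_c; rewrite oc1 ltn0 => /andP[].
Qed.
End DerivedCentraliser.

Lemma delta_sum_eq0 p m o1 o2 d1 d2 : prime p -> odd p -> o2 <= o1 -> o1 < m ->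
  (Ssum (r2_of p m o1 o2)%:Z (d1 * p ^ (m - o1))
     = 1 - (r1_of p m o1)%:Z %[mod (p ^ m)%:Z])%Z ->
  (Ssum (r1_of p m o1)%:Z (d2 * p ^ (m - o2))
     * ((r2_of p m o1 o2)%:Z ^+ (d1 * p ^ (m - o1)))%R
     = (r2_of p m o1 o2)%:Z - 1 %[mod (p ^ m)%:Z])%Z ->
  d1 + d2 = 0 %[mod p ^ o2].
Proof.
move=> p_pr p_odd le_o21 lt_o1m.
have r2E : ((r2_of p m o1 o2)%:Z = (1 + (p ^ (m - o1))%:Z) ^+ (p ^ (o1 - o2))%N)%R.
  by rewrite /r2_of ltnNge le_o21 /= [LHS]PoszX.
have pt : (p %| (p ^ (m - o1))%:Z)%Z by rewrite dvdzE /= dvdn_exp ?subn_gt0.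
have [mE m_o2E] : m = o2 + (m - o2) /\ m - o2 = o1 - o2 + (m - o1) by lia.
rewrite r2E /r1_of => H1 H2; have := Ssum_congr_dvdn p_pr p_odd pt H1 H2.
rewrite mulnCA -expnD -m_o2E -mulnDl {1}mE expnD.
by rewrite dvdn_pmul2r ?expn_gt0 ?prime_gt0 // mod0n => /eqP.
Qed.

Lemma delta2_eq1 p m o2 d2 : prime p -> odd p -> o2 < m -> 0 < d2 <= p ^ o2 ->
  (Ssum (r1_of p m 0)%:Z (d2 * p ^ (m - o2)) * ((r2_of p m 0 o2)%:Z ^+ (p ^ m))%R
     = (r2_of p m 0 o2)%:Z - 1 %[mod (p ^ m)%:Z])%Z ->
  d2 = 1.
Proof.
move=> p_pr p_odd lt_o2m /andP[d2_gt0 d2_le].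
have r2E : r2_of p m 0 o2 = 1 + p ^ (m - o2).
  by rewrite /r2_of /r1_of; case: o2 {lt_o2m d2_le} => [|o2] //=; rewrite subn0 expn1.
have ps : (p %| (p ^ (m - o2))%:Z)%Z by rewrite dvdzE /= dvdn_exp ?subn_gt0.
have mE : m = o2 + (m - o2) by lia.
rewrite r2E /r1_of subn0 => H2.
have := Ssum_ppow_modz m (d2 * p ^ (m - o2)) p_pr p_odd ps.
rewrite H2 PoszD addrAC subrr add0r !modz_nat => -[] /esym /eqP.
rewrite eqn_mod_dvd ?leq_pmull // -{2}[p ^ (m - o2)]mul1n -mulnBl {1}mE expnD.
rewrite dvdn_pmul2r ?expn_gt0 ?prime_gt0 // => dvd_d2; clear H2.
have [|d2_gt1] := posnP (d2 - 1); first lia.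
by have := dvdn_leq d2_gt1 dvd_d2; lia.
Qed.

Unset Implicit Arguments.

Theorem lemma3p6 (gT : finGroupType) (G : {group gT}) (p m n1 n2 o1 o2 d1 d2 : nat) :
  prime p -> odd p ->
  (p.-group G)%g -> ~~ abelian G -> cyclic (G^`(1))%g ->
  #|G^`(1)%g| = p ^ m ->
  1 <= n2 -> n2 <= n1 ->
  (exists b1 b2 : gT, is_basis p G n1 n2 b1 b2) ->
  lexmin_o p G n1 n2 o1 o2 ->
  1 <= d1 <= p ^ o1 -> 1 <= d2 <= p ^ o2 ->
  (Ssum (r2_of p m o1 o2)%:Z (d1 * p ^ (m - o1))
     = 1 - (r1_of p m o1)%:Z %[mod (p ^ m)%:Z])%Z ->
  (Ssum (r1_of p m o1)%:Z (d2 * p ^ (m - o2))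
     * ((r2_of p m o1 o2)%:Z ^+ (d1 * p ^ (m - o1)))%R
     = (r2_of p m o1 o2)%:Z - 1 %[mod (p ^ m)%:Z])%Z ->
  (o1 = 0 -> d1 = 1 /\ d2 = 1) /\
  (o1 <> 0 -> d1 + d2 = 0 %[mod p ^ o2]).
Proof.
move=> p_pr p_odd pG nabG cycG' oG' _ le_n21 _ lexmin d1_bnd d2_bnd H1 H2.
have m_gt0 : 0 < m.
  rewrite lt0n; apply: contraNneq nabG => m0.
  by apply/derG1P/eqP; rewrite trivg_card1 oG' m0.
have oexp_lt g : g \in G -> oexp p G g < m.
  by move=> Gg; rewrite -(prednK m_gt0) ltnS -(pfactorK m p_pr) -oG' oexp_leq.
have [[b1 [b2 [/and5P[Gb1 Gb2 _ _ _] [o1E o2E]]]] _] := lexmin.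
have [lt_o1m lt_o2m] : o1 < m /\ o2 < m by rewrite -o1E -o2E !oexp_lt.
split => [o1_0 | /eqP o1_neq0].
- have d1_1 : d1 = 1 by move: d1_bnd; rewrite o1_0 expn0; lia.
  rewrite o1_0 d1_1 mul1n subn0 in H2.
  by split; last exact: delta2_eq1 p_pr p_odd lt_o2m d2_bnd H2.
- apply: delta_sum_eq0 H1 H2 => //.
  exact: lexmin_o_le p_pr p_odd pG cycG' le_n21 lexmin o1_neq0.
Qed.
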